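(* Let $u$ be a smooth, nowhere vanishing solution of the DNLS equation $\mathrm{i}u_t+u_{xx}+2\mathrm{i}(|u|^2u)_x=0$, and let $s_1,\alpha_4\in\mathbb{R}$ be such that $\mathbf{L}=-\frac{\mathrm{i}}{8}\mathbf{V}(\mathbf{Q};\lambda)+\frac{\mathrm{i}s_1}{4}\mathbf{U}(\mathbf{Q};\lambda)+\alpha_4\sigma_3$ satisfies $\mathbf{L}_x=[\mathbf{U},\mathbf{L}]$, $\mathbf{L}_t=[\mathbf{V},\mathbf{L}]$ for all $\lambda$. Then $\det\mathbf{L}$ is independent of $(x,t)$ and has the form $\det\mathbf{L}=P(\lambda)=-\lambda^8+s_1\lambda^6-s_2\lambda^4+s_3\lambda^2-s_4$ for constants $s_2,s_3,s_4\in\mathbb{R}$, and $\nu=|u|^2$, viewed as a function of $\xi=x+2s_1t$, satisfies $$\nu_\xi^2=-R(\nu),$$ where $$R(\nu)=\nu^4+4s_1\nu^3+(6s_1^2-8s_2+48\alpha_4)\nu^2+(4s_1^3-16s_1s_2+64s_3+32s_1\alpha_4)\nu+(-s_1^2+4s_2+8\alpha_4)^2.$$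
   Context: $\sigma_3=\mathrm{diag}(1,-1)$, $\mathbf{Q}=\begin{pmatrix}0&\mathrm{i}u\\ \mathrm{i}u^*&0\end{pmatrix}$, $\mathbf{U}(\mathbf{Q};\lambda)=-2\mathrm{i}\sigma_3\lambda^2+2\mathbf{Q}\lambda$, $\mathbf{V}(\mathbf{Q};\lambda)=(4\lambda^2+2\mathbf{Q}^2)\mathbf{U}(\mathbf{Q};\lambda)+2\mathrm{i}\sigma_3\mathbf{Q}_x\lambda$ (the DNLS Lax pair). *)

From Stdlib Require Import Reals.
From Stdlib Require Import List.
From Coquelicot Require Import Coquelicot.
Open Scope R_scope.

Definition pdx (f : R -> R -> C) : R -> R -> C :=
  fun x t => (Derive (fun y => fst (f y t)) x, Derive (fun y => snd (f y t)) x).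
Definition pdt (f : R -> R -> C) : R -> R -> C :=
  fun x t => (Derive (fun s => fst (f x s)) t, Derive (fun s => snd (f x s)) t).

Definition ex_pdx (f : R -> R -> C) : Prop :=
  forall x t, ex_derive (fun y => fst (f y t)) x /\ ex_derive (fun y => snd (f y t)) x.
Definition ex_pdt (f : R -> R -> C) : Prop :=
  forall x t, ex_derive (fun s => fst (f x s)) t /\ ex_derive (fun s => snd (f x s)) t.

Fixpoint pd_word (w : list bool) (f : R -> R -> C) : R -> R -> C :=
  match w with
  | nil => f
  | b :: w' => if b then pdx (pd_word w' f) else pdt (pd_word w' f)
  end.

Definition smooth2 (f : R -> R -> C) : Prop :=
  forall w : list bool,
    ex_pdx (pd_word w f) /\ ex_pdt (pd_word w f) /\
    (forall x t, continuous (fun p : R * R => pd_word w f (fst p) (snd p)) (x, t)).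

Open Scope C_scope.

Record M2 := mkM2 { m11 : C; m12 : C; m21 : C; m22 : C }.

Definition M2add (A B : M2) : M2 :=
  mkM2 (m11 A + m11 B) (m12 A + m12 B) (m21 A + m21 B) (m22 A + m22 B).
Definition M2sub (A B : M2) : M2 :=
  mkM2 (m11 A - m11 B) (m12 A - m12 B) (m21 A - m21 B) (m22 A - m22 B).
Definition M2scal (c : C) (A : M2) : M2 :=
  mkM2 (c * m11 A) (c * m12 A) (c * m21 A) (c * m22 A).
Definition M2mul (A B : M2) : M2 :=
  mkM2 (m11 A * m11 B + m12 A * m21 B) (m11 A * m12 B + m12 A * m22 B)
       (m21 A * m11 B + m22 A * m21 B) (m21 A * m12 B + m22 A * m22 B).
Definition M2comm (A B : M2) : M2 := M2sub (M2mul A B) (M2mul B A).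
Definition M2det (A : M2) : C := m11 A * m22 A - m12 A * m21 A.

Definition sigma3 : M2 := mkM2 1 0 0 (-1).

Definition M2pdx (F : R -> R -> M2) : R -> R -> M2 :=
  fun x t => mkM2 (pdx (fun y s => m11 (F y s)) x t) (pdx (fun y s => m12 (F y s)) x t)
                  (pdx (fun y s => m21 (F y s)) x t) (pdx (fun y s => m22 (F y s)) x t).
Definition M2pdt (F : R -> R -> M2) : R -> R -> M2 :=
  fun x t => mkM2 (pdt (fun y s => m11 (F y s)) x t) (pdt (fun y s => m12 (F y s)) x t)
                  (pdt (fun y s => m21 (F y s)) x t) (pdt (fun y s => m22 (F y s)) x t).

Definition Qmat (q : C) : M2 := mkM2 0 (Ci * q) (Ci * Cconj q) 0.

Definition Umat (q lam : C) : M2 :=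
  M2add (M2scal (-(2) * Ci * lam * lam) sigma3) (M2scal (2 * lam) (Qmat q)).

(** V(Q;lambda) = (4 lambda^2 + 2 Q^2) U + 2 i sigma3 Q_x lambda,
    where q = u and qx = u_x at the point. *)
Definition Vmat (q qx lam : C) : M2 :=
  M2add (M2mul (M2add (M2scal (4 * lam * lam) (mkM2 1 0 0 1))
                      (M2scal 2 (M2mul (Qmat q) (Qmat q))))
               (Umat q lam))
        (M2scal (2 * Ci * lam) (M2mul sigma3 (Qmat qx))).

Definition Lmat (s1 alpha4 : R) (q qx lam : C) : M2 :=
  M2add (M2add (M2scal (- (Ci / 8)) (Vmat q qx lam))
               (M2scal (Ci * RtoC s1 / 4) (Umat q lam)))
        (M2scal (RtoC alpha4) sigma3).

Close Scope C_scope.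

Definition Rpoly (s1 s2 s3 alpha4 nu : R) : R :=
  nu ^ 4 + 4 * s1 * nu ^ 3
  + (6 * s1 ^ 2 - 8 * s2 + 48 * alpha4) * nu ^ 2
  + (4 * s1 ^ 3 - 16 * s1 * s2 + 64 * s3 + 32 * s1 * alpha4) * nu
  + (- s1 ^ 2 + 4 * s2 + 8 * alpha4) ^ 2.

From Stdlib Require Import Reals Lra.
From Coquelicot Require Import Coquelicot.
Open Scope R_scope.

(* Write L(x, t; lam) for the Lax matrix and nu = |u|^2.  Since L_x = [U, L] and L_t = [V, L],
   the x- and t-derivatives of det L are tr (adj L [U, L]) = 0 and tr (adj L [V, L]) = 0, so
   det L is constant; its coefficients are explicit polynomials in u and u_x, which gives
   s2, s3 and s4 = alpha4^2.  The (1,1) entry of L at lam = 1 is -1 + (nu + s1)/2 + alpha4, and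
   there the (1,1) entry of [V, L] is 2 s1 times that of [U, L]; hence nu_t = 2 s1 nu_x, and nu
   is constant along the characteristics x + 2 s1 t = const.  Finally nu_x = 2 Re (u conj u_x),
   and the identity nu_x^2 = -R(nu) is a polynomial identity once s2 and s3 are replaced by
   their expressions in u and u_x. *)

Definition dCmod2 (q dq : C) : R := 2 * (fst q * fst dq + snd q * snd dq).

(* The coefficients of lam^4 and lam^2 in det L; in the notation of the statement,
   s2 = - detL_coef4, s3 = detL_coef2 and s4 = alpha4^2. *)
Definition detL_coef4 (s1 a4 : R) (q qx : C) : R :=
  - ((Cmod q ^ 2 + s1) / 2) ^ 2 + 2 * a4 + (Cmod q ^ 2 + s1) * Cmod q ^ 2
  - (fst qx * snd q - snd qx * fst q) / 2.

Definition detL_coef2 (s1 a4 : R) (q qx : C) : R :=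
  - (Cmod q ^ 2 + s1) * a4 - Cmod q ^ 2 * ((Cmod q ^ 2 + s1) / 2) ^ 2 - Cmod qx ^ 2 / 16
  + (Cmod q ^ 2 + s1) * (fst qx * snd q - snd qx * fst q) / 4.

Lemma M2det_Lmat s1 a4 q qx lam :
  M2det (Lmat s1 a4 q qx lam) =
  (- lam ^ 8 + RtoC s1 * lam ^ 6 + RtoC (detL_coef4 s1 a4 q qx) * lam ^ 4
   + RtoC (detL_coef2 s1 a4 q qx) * lam ^ 2 - RtoC (a4 ^ 2))%C.
Proof.
  unfold detL_coef4, detL_coef2; rewrite !Cmod2_alt.
  destruct q as [a b], qx as [p r], lam as [l m].
  unfold M2det, Lmat, Vmat, Umat, Qmat, sigma3; cbn -[Rdiv].
  apply injective_projections; cbn -[Rdiv]; field.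
Qed.

Lemma Cmod2_Lmat_11 s1 a4 q qx :
  Cmod q ^ 2 = 2 * fst (m11 (Lmat s1 a4 q qx (RtoC 1))) + 2 - s1 - 2 * a4.
Proof.
  rewrite Cmod2_alt; destruct q as [a b], qx as [p r].
  cbn -[Rdiv]; field.
Qed.

Lemma M2comm_Vmat_Lmat_11 s1 a4 q qx :
  m11 (M2comm (Vmat q qx (RtoC 1)) (Lmat s1 a4 q qx (RtoC 1))) =
  (RtoC (2 * s1) * m11 (M2comm (Umat q (RtoC 1)) (Lmat s1 a4 q qx (RtoC 1))))%C.
Proof.
  cbn [m11 m12 m21 m22 M2comm M2sub Lmat Vmat Umat Qmat sigma3 M2add M2scal M2mul].
  destruct q as [a b], qx as [p r].
  apply injective_projections; cbn -[Rdiv]; field.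
Qed.

Lemma dCmod2_sqr_Rpoly s1 a4 q qx :
  dCmod2 q qx ^ 2 =
  - Rpoly s1 (- detL_coef4 s1 a4 q qx) (detL_coef2 s1 a4 q qx) a4 (Cmod q ^ 2).
Proof.
  unfold Rpoly, detL_coef4, detL_coef2, dCmod2; rewrite !Cmod2_alt.
  destruct q as [a b], qx as [p r]; cbn -[Rdiv]; field.
Qed.

Definition ex_derive_C (f : R -> C) (x : R) : Prop :=
  ex_derive (fun y => fst (f y)) x /\ ex_derive (fun y => snd (f y)) x.

Definition Derive_C (f : R -> C) (x : R) : C :=
  (Derive (fun y => fst (f y)) x, Derive (fun y => snd (f y)) x).

Lemma ex_derive_C_const (c : C) x : ex_derive_C (fun _ => c) x.
Proof. split; apply ex_derive_const. Qed.

Lemma ex_derive_C_plus f g x :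
  ex_derive_C f x -> ex_derive_C g x -> ex_derive_C (fun y => f y + g y)%C x.
Proof.
  intros [f1 f2] [g1 g2]; split.
  - exact (ex_derive_plus (fun y => fst (f y)) (fun y => fst (g y)) x f1 g1).
  - exact (ex_derive_plus (fun y => snd (f y)) (fun y => snd (g y)) x f2 g2).
Qed.

Lemma ex_derive_C_opp f x : ex_derive_C f x -> ex_derive_C (fun y => - f y)%C x.
Proof.
  intros [f1 f2]; split.
  - exact (ex_derive_opp (fun y => fst (f y)) x f1).
  - exact (ex_derive_opp (fun y => snd (f y)) x f2).
Qed.

Lemma ex_derive_C_minus f g x :
  ex_derive_C f x -> ex_derive_C g x -> ex_derive_C (fun y => f y - g y)%C x.
Proof. intros; apply ex_derive_C_plus, ex_derive_C_opp; assumption. Qed.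

Lemma ex_derive_C_mult f g x :
  ex_derive_C f x -> ex_derive_C g x -> ex_derive_C (fun y => f y * g y)%C x.
Proof.
  intros [f1 f2] [g1 g2]; split.
  - apply (ex_derive_minus (fun y => fst (f y) * fst (g y)) (fun y => snd (f y) * snd (g y)));
      apply ex_derive_mult; assumption.
  - apply (ex_derive_plus (fun y => fst (f y) * snd (g y)) (fun y => snd (f y) * fst (g y)));
      apply ex_derive_mult; assumption.
Qed.

Lemma ex_derive_C_conj f x : ex_derive_C f x -> ex_derive_C (fun y => Cconj (f y)) x.
Proof.
  intros [f1 f2]; split; [exact f1|].
  exact (ex_derive_opp (fun y => snd (f y)) x f2).
Qed.

Lemma Derive_C_plus f g x : ex_derive_C f x -> ex_derive_C g x ->
  Derive_C (fun y => f y + g y)%C x = (Derive_C f x + Derive_C g x)%C.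
Proof.
  intros [f1 f2] [g1 g2]; unfold Derive_C; cbn.
  rewrite (Derive_plus (fun y => fst (f y)) (fun y => fst (g y))) by assumption.
  rewrite (Derive_plus (fun y => snd (f y)) (fun y => snd (g y))) by assumption.
  reflexivity.
Qed.

Lemma Derive_C_opp f x : Derive_C (fun y => - f y)%C x = (- Derive_C f x)%C.
Proof.
  unfold Derive_C; cbn.
  rewrite (Derive_opp (fun y => fst (f y))), (Derive_opp (fun y => snd (f y))).
  reflexivity.
Qed.

Lemma Derive_C_minus f g x : ex_derive_C f x -> ex_derive_C g x ->
  Derive_C (fun y => f y - g y)%C x = (Derive_C f x - Derive_C g x)%C.
Proof.
  intros; unfold Cminus.
  rewrite Derive_C_plus, Derive_C_opp; auto using ex_derive_C_opp.
Qed.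

Lemma Derive_C_mult f g x : ex_derive_C f x -> ex_derive_C g x ->
  Derive_C (fun y => f y * g y)%C x = (Derive_C f x * g x + f x * Derive_C g x)%C.
Proof.
  intros [f1 f2] [g1 g2]; unfold Derive_C; cbn.
  rewrite (Derive_minus (fun y => fst (f y) * fst (g y)) (fun y => snd (f y) * snd (g y)))
    by (apply ex_derive_mult; assumption).
  rewrite (Derive_plus (fun y => fst (f y) * snd (g y)) (fun y => snd (f y) * fst (g y)))
    by (apply ex_derive_mult; assumption).
  rewrite !Derive_mult by assumption.
  apply injective_projections; cbn; ring.
Qed.

Lemma is_derive_0_const (f : R -> R) : (forall y, is_derive f y 0) -> forall a b, f a = f b.
Proof.
  intros Hf.
  assert (Hlt : forall a b, a < b -> f a = f b)
    by (intros a b Hab; apply eq_is_derive; auto).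
  intros a b; destruct (Rtotal_order a b) as [h | [-> | h]]; auto.
  symmetry; auto.
Qed.

Lemma Derive_C_0_const (f : R -> C) :
  (forall y, ex_derive_C f y /\ Derive_C f y = 0%C) -> forall a b, f a = f b.
Proof.
  intros Hf a b; apply injective_projections;
    [apply (is_derive_0_const (fun y => fst (f y))) | apply (is_derive_0_const (fun y => snd (f y)))];
    intros y; destruct (Hf y) as [[f1 f2] Hd].
  - injection Hd as <- _; exact (Derive_correct _ _ f1).
  - injection Hd as _ <-; exact (Derive_correct _ _ f2).
Qed.

Lemma is_derive_Cmod2 f x : ex_derive_C f x ->
  is_derive (fun y => Cmod (f y) ^ 2) x (dCmod2 (f x) (Derive_C f x)).
Proof.
  intros [f1 f2].
  pose proof (is_derive_plus _ _ x _ _ (is_derive_pow _ 2 x _ (Derive_correct _ _ f1))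
                (is_derive_pow _ 2 x _ (Derive_correct _ _ f2))) as H.
  apply (is_derive_ext _ _ _ _ (fun y => eq_sym (Cmod2_alt (f y)))).
  replace (dCmod2 (f x) (Derive_C f x))
    with (plus (INR 2 * Derive (fun y => fst (f y)) x * fst (f x) ^ 1)
               (INR 2 * Derive (fun y => snd (f y)) x * snd (f x) ^ 1)).
  - exact H.
  - unfold dCmod2, plus; cbn; ring.
Qed.

Definition ex_derive_M2 (G : R -> M2) (x : R) : Prop :=
  ex_derive_C (fun y => m11 (G y)) x /\ ex_derive_C (fun y => m12 (G y)) x /\
  ex_derive_C (fun y => m21 (G y)) x /\ ex_derive_C (fun y => m22 (G y)) x.

Definition Derive_M2 (G : R -> M2) (x : R) : M2 :=
  mkM2 (Derive_C (fun y => m11 (G y)) x) (Derive_C (fun y => m12 (G y)) x)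
       (Derive_C (fun y => m21 (G y)) x) (Derive_C (fun y => m22 (G y)) x).

Lemma ex_derive_C_M2det G x : ex_derive_M2 G x -> ex_derive_C (fun y => M2det (G y)) x.
Proof.
  intros (d11 & d12 & d21 & d22); unfold M2det.
  apply ex_derive_C_minus; apply ex_derive_C_mult; assumption.
Qed.

Lemma Derive_C_M2det G x : ex_derive_M2 G x ->
  Derive_C (fun y => M2det (G y)) x =
  (m11 (Derive_M2 G x) * m22 (G x) + m11 (G x) * m22 (Derive_M2 G x)
   - (m12 (Derive_M2 G x) * m21 (G x) + m12 (G x) * m21 (Derive_M2 G x)))%C.
Proof.
  intros (d11 & d12 & d21 & d22); unfold M2det.
  rewrite Derive_C_minus by (apply ex_derive_C_mult; assumption).
  rewrite !Derive_C_mult by assumption.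
  reflexivity.
Qed.

(* tr (adj L [U, L]) = 0. *)
Lemma M2det_derivation_comm (U L : M2) :
  (m11 (M2comm U L) * m22 L + m11 L * m22 (M2comm U L)
   - (m12 (M2comm U L) * m21 L + m12 L * m21 (M2comm U L)))%C = 0%C.
Proof.
  destruct U, L; unfold M2comm, M2sub, M2mul; cbn -[Cmult Cplus Cminus Copp]; ring.
Qed.

Lemma M2det_const_of_Lax (G U : R -> M2) :
  (forall y, ex_derive_M2 G y) -> (forall y, Derive_M2 G y = M2comm (U y) (G y)) ->
  forall a b, M2det (G a) = M2det (G b).
Proof.
  intros HG HLax; apply Derive_C_0_const; intros y; split.
  - apply ex_derive_C_M2det, HG.
  - rewrite Derive_C_M2det, HLax by apply HG; apply M2det_derivation_comm.
Qed.

Lemma transport_const_on_characteristics (f fx : R -> R -> R) (k : R) :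
  (forall x t, is_derive (fun y => f y t) x (fx x t)) ->
  (forall x t, is_derive (fun s => f x s) t (k * fx x t)) ->
  (forall x t, continuity_2d_pt fx x t) ->
  forall x t, f x t = f (x + k * t) 0.
Proof.
  intros Hx Ht Hc x t.
  assert (Hdiff : forall a b, differentiable_pt_lim f a b (fx a b) (k * fx a b)).
  { intros a b; apply filterdiff_differentiable_pt_lim.
    eapply filterdiff_ext_lin.
    - apply is_derive_filterdiff.
      + apply filter_forall; intros; apply Hx.
      + apply Ht.
      + apply (continuity_2d_pt_filterlim fx), Hc.
    - intros [h l]; reflexivity. }
  set (xi := x + k * t).
  assert (Hchar : forall s, is_derive (fun s => f (xi - k * s) s) s 0).
  { intros s; apply is_derive_Reals.
    replace 0 with (fx (xi - k * s) s * (- k) + k * fx (xi - k * s) s * 1) by ring.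
    apply derivable_pt_lim_comp_2d; [apply Hdiff | | apply derivable_pt_lim_id].
    apply is_derive_Reals; auto_derive; [easy | ring]. }
  pose proof (is_derive_0_const _ Hchar t 0) as E; cbv beta in E.
  replace (xi - k * t) with x in E by (unfold xi; ring).
  replace (xi - k * 0) with xi in E by ring.
  exact E.
Qed.

Lemma ex_derive_M2_Lmat s1 a4 lam (q qx : R -> C) y :
  ex_derive_C q y -> ex_derive_C qx y ->
  ex_derive_M2 (fun z => Lmat s1 a4 (q z) (qx z) lam) y.
Proof.
  intros Hq Hqx; split; [|split; [|split]];
    cbn [m11 m12 m21 m22 Lmat Vmat Umat Qmat sigma3 M2add M2scal M2mul];
    repeat match goal with
    | |- ex_derive_C (fun _ => _ + _)%C _ => apply ex_derive_C_plus
    | |- ex_derive_C (fun _ => _ * _)%C _ => apply ex_derive_C_mult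
    | |- ex_derive_C (fun _ => Cconj _) _ => apply ex_derive_C_conj
    | |- ex_derive_C (fun _ => ?c) _ => apply ex_derive_C_const
    end; assumption.
Qed.

Lemma Derive_Lmat_11 s1 a4 (q qx : R -> C) y :
  ex_derive_C q y -> ex_derive_C qx y ->
  fst (m11 (Derive_M2 (fun z => Lmat s1 a4 (q z) (qx z) (RtoC 1)) y))
  = dCmod2 (q y) (Derive_C q y) / 2.
Proof.
  intros Hq Hqx.
  change (Derive (fun z => fst (m11 (Lmat s1 a4 (q z) (qx z) (RtoC 1)))) y
          = dCmod2 (q y) (Derive_C q y) / 2).
  rewrite (Derive_ext _ (fun z => (Cmod (q z) ^ 2 - 2 + s1 + 2 * a4) / 2))
    by (intros z; rewrite (Cmod2_Lmat_11 s1 a4 (q z) (qx z)); field).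
  pose (g := fun z => Cmod (q z) ^ 2).
  assert (D : is_derive g y (dCmod2 (q y) (Derive_C q y))) by exact (is_derive_Cmod2 q y Hq).
  change (Derive (fun z => (g z - 2 + s1 + 2 * a4) / 2) y = dCmod2 (q y) (Derive_C q y) / 2).
  clearbody g; apply is_derive_unique; auto_derive.
  - exists (dCmod2 (q y) (Derive_C q y)); exact D.
  - change (Derive (fun x => g x) y) with (Derive g y); rewrite (is_derive_unique _ _ _ D); field.
Qed.

Lemma smooth2_ex_derive_C (u : R -> R -> C) : smooth2 u -> forall x t,
  ex_derive_C (fun y => u y t) x /\ ex_derive_C (fun s => u x s) t /\
  ex_derive_C (fun y => pdx u y t) x /\ ex_derive_C (fun s => pdx u x s) t.
Proof.
  intros Hu x t.
  destruct (Hu nil) as (Hx & Ht & _), (Hu (true :: nil)%list) as (Hxx & Hxt & _).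
  exact (conj (Hx x t) (conj (Ht x t) (conj (Hxx x t) (Hxt x t)))).
Qed.

Lemma continuity_2d_pt_fst_snd (f : R -> R -> C) x t :
  continuous (fun p : R * R => f (fst p) (snd p)) (x, t) ->
  continuity_2d_pt (fun a b => fst (f a b)) x t /\ continuity_2d_pt (fun a b => snd (f a b)) x t.
Proof.
  intros Hf; split; apply continuity_2d_pt_filterlim.
  - apply (filterlim_comp _ _ _ (fun p : R * R => f (fst p) (snd p)) fst
             (locally (x, t)) (locally (f x t))); [exact Hf |].
    destruct (f x t) as [a b]; apply (continuous_fst (U := R_UniformSpace) (V := R_UniformSpace) a b).
  - apply (filterlim_comp _ _ _ (fun p : R * R => f (fst p) (snd p)) snd
             (locally (x, t)) (locally (f x t))); [exact Hf |].
    destruct (f x t) as [a b]; apply (continuous_snd (U := R_UniformSpace) (V := R_UniformSpace) a b).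
Qed.

Lemma smooth2_continuity_dCmod2 (u : R -> R -> C) : smooth2 u -> forall x t,
  continuity_2d_pt (fun a b => dCmod2 (u a b) (pdx u a b)) x t.
Proof.
  intros Hu x t.
  destruct (Hu nil) as (_ & _ & Hc), (Hu (true :: nil)%list) as (_ & _ & Hcx).
  destruct (continuity_2d_pt_fst_snd u x t (Hc x t)) as [c1 c2].
  destruct (continuity_2d_pt_fst_snd (pdx u) x t (Hcx x t)) as [c3 c4].
  unfold dCmod2.
  apply continuity_2d_pt_mult; [apply continuity_2d_pt_const |].
  apply continuity_2d_pt_plus; apply continuity_2d_pt_mult; assumption.
Qed.

Section Lax_flow.

Variables (u : R -> R -> C) (s1 alpha4 : R).
Hypothesis Hsmooth : smooth2 u.
Hypothesis Hlax : forall (lam : C) x t,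
  M2pdx (fun y s => Lmat s1 alpha4 (u y s) (pdx u y s) lam) x t
  = M2comm (Umat (u x t) lam) (Lmat s1 alpha4 (u x t) (pdx u x t) lam) /\
  M2pdt (fun y s => Lmat s1 alpha4 (u y s) (pdx u y s) lam) x t
  = M2comm (Vmat (u x t) (pdx u x t) lam) (Lmat s1 alpha4 (u x t) (pdx u x t) lam).

Lemma M2det_Lmat_u_const lam x t :
  M2det (Lmat s1 alpha4 (u x t) (pdx u x t) lam)
  = M2det (Lmat s1 alpha4 (u 0 0) (pdx u 0 0) lam).
Proof.
  transitivity (M2det (Lmat s1 alpha4 (u 0 t) (pdx u 0 t) lam)).
  - apply (M2det_const_of_Lax (fun y => Lmat s1 alpha4 (u y t) (pdx u y t) lam)
                              (fun y => Umat (u y t) lam)).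
    + intros y; destruct (smooth2_ex_derive_C u Hsmooth y t) as (Hx & _ & Hxx & _).
      apply ex_derive_M2_Lmat; assumption.
    + intros y; exact (proj1 (Hlax lam y t)).
  - apply (M2det_const_of_Lax (fun s => Lmat s1 alpha4 (u 0 s) (pdx u 0 s) lam)
                              (fun s => Vmat (u 0 s) (pdx u 0 s) lam)).
    + intros s; destruct (smooth2_ex_derive_C u Hsmooth 0 s) as (_ & Ht & _ & Hxt).
      apply ex_derive_M2_Lmat; assumption.
    + intros s; exact (proj2 (Hlax lam 0 s)).
Qed.

Lemma detL_coefs_u_const x t :
  detL_coef4 s1 alpha4 (u x t) (pdx u x t) = detL_coef4 s1 alpha4 (u 0 0) (pdx u 0 0) /\
  detL_coef2 s1 alpha4 (u x t) (pdx u x t) = detL_coef2 s1 alpha4 (u 0 0) (pdx u 0 0).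
Proof.
  pose proof (M2det_Lmat_u_const (RtoC 1) x t) as E1.
  pose proof (M2det_Lmat_u_const (RtoC 2) x t) as E2.
  rewrite !M2det_Lmat in E1, E2.
  apply (f_equal fst) in E1, E2; cbn in E1, E2.
  split; lra.
Qed.

Lemma is_derive_t_Cmod2_u x t :
  is_derive (fun s => Cmod (u x s) ^ 2) t (2 * s1 * dCmod2 (u x t) (pdx u x t)).
Proof.
  destruct (smooth2_ex_derive_C u Hsmooth x t) as (Hx & Ht & Hxx & Hxt).
  destruct (Hlax (RtoC 1) x t) as [Lx Lt].
  pose proof (Derive_Lmat_11 s1 alpha4 _ _ x Hx Hxx) as Ex.
  pose proof (Derive_Lmat_11 s1 alpha4 _ _ t Ht Hxt) as Et.
  change (fst (m11 (M2pdx (fun y s => Lmat s1 alpha4 (u y s) (pdx u y s) (RtoC 1)) x t))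
          = dCmod2 (u x t) (pdx u x t) / 2) in Ex.
  change (fst (m11 (M2pdt (fun y s => Lmat s1 alpha4 (u y s) (pdx u y s) (RtoC 1)) x t))
          = dCmod2 (u x t) (Derive_C (fun s => u x s) t) / 2) in Et.
  rewrite Lx in Ex; rewrite Lt, M2comm_Vmat_Lmat_11 in Et.
  replace (2 * s1 * dCmod2 (u x t) (pdx u x t))
    with (dCmod2 (u x t) (Derive_C (fun s => u x s) t)).
  - exact (is_derive_Cmod2 _ t Ht).
  - cbn [fst snd Cmult RtoC] in Et; rewrite Ex in Et; lra.
Qed.

Lemma Cmod2_u_transport x t : Cmod (u x t) ^ 2 = Cmod (u (x + 2 * s1 * t) 0) ^ 2.
Proof.
  apply (transport_const_on_characteristics (fun a b => Cmod (u a b) ^ 2)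
           (fun a b => dCmod2 (u a b) (pdx u a b)) (2 * s1)).
  - intros a b; exact (is_derive_Cmod2 _ a (proj1 (smooth2_ex_derive_C u Hsmooth a b))).
  - exact is_derive_t_Cmod2_u.
  - exact (smooth2_continuity_dCmod2 u Hsmooth).
Qed.

End Lax_flow.

Theorem mainTheorem5 (u : R -> R -> C) (s1 alpha4 : R) :
  smooth2 u ->
  (forall x t, u x t <> 0%C) ->
  (forall x t,
     (Ci * pdt u x t + pdx (pdx u) x t
      + 2 * Ci * pdx (fun y s => RtoC (Cmod (u y s) ^ 2) * u y s) x t)%C = 0%C) ->
  (forall lam : C, forall x t,
     M2pdx (fun y s => Lmat s1 alpha4 (u y s) (pdx u y s) lam) x t
     = M2comm (Umat (u x t) lam) (Lmat s1 alpha4 (u x t) (pdx u x t) lam) /\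
     M2pdt (fun y s => Lmat s1 alpha4 (u y s) (pdx u y s) lam) x t
     = M2comm (Vmat (u x t) (pdx u x t) lam) (Lmat s1 alpha4 (u x t) (pdx u x t) lam)) ->
  exists s2 s3 s4 : R,
    (forall (lam : C) x t,
       M2det (Lmat s1 alpha4 (u x t) (pdx u x t) lam)
       = (- lam ^ 8 + RtoC s1 * lam ^ 6 - RtoC s2 * lam ^ 4
          + RtoC s3 * lam ^ 2 - RtoC s4)%C) /\
    exists N : R -> R,
      (forall x t, Cmod (u x t) ^ 2 = N (x + 2 * s1 * t)) /\
      (forall xi, ex_derive N xi /\ (Derive N xi) ^ 2 = - Rpoly s1 s2 s3 alpha4 (N xi)).
Proof.
  intros Hsmooth _ _ Hlax.
  exists (- detL_coef4 s1 alpha4 (u 0 0) (pdx u 0 0)), (detL_coef2 s1 alpha4 (u 0 0) (pdx u 0 0)),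
         (alpha4 ^ 2); split.
  - intros lam x t.
    destruct (detL_coefs_u_const u s1 alpha4 Hsmooth Hlax x t) as [E4 E2].
    rewrite M2det_Lmat, E4, E2, RtoC_opp; ring.
  - exists (fun xi => Cmod (u xi 0) ^ 2); split.
    + exact (Cmod2_u_transport u s1 alpha4 Hsmooth Hlax).
    + intros xi; destruct (smooth2_ex_derive_C u Hsmooth xi 0) as [Hx _].
      pose proof (is_derive_Cmod2 _ xi Hx) as D; split; [eexists; exact D |].
      erewrite is_derive_unique by exact D.
      destruct (detL_coefs_u_const u s1 alpha4 Hsmooth Hlax xi 0) as [E4 E2].
      rewrite <- E4, <- E2; apply dCmod2_sqr_Rpoly.
Qed.
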